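(* Every deterministic max-finding algorithm with error $k$ requires $\Omega(n^{1+1/(2^k-1)})$ comparisons on $n$ elements (in the worst case).
   Context: Model of imprecise comparisons: there are $n$ elements, each with a fixed unknown real value; we identify an element with its value. Asked to compare $x_i$ and $x_j$, the comparator answers either ''$x_i \ge x_j$'' or ''$x_j \ge x_i$''. If $|x_i-x_j|>1$ the answer is correct; if $|x_i-x_j|\le 1$ the answer is arbitrary (possibly adversarial and adaptive). A max-finding algorithm has error $k$ if for every input and every consistent comparator behaviour its output $x$ satisfies $x \ge x^*-k$, where $x^*$ is the maximum value of an input element. *)

From mathcomp Require Import all_boot.
From Stdlib Require Import Reals.

Set Implicit Arguments.
Unset Strict Implicit.

(* A deterministic (adaptive) comparison algorithm on n elements is a binary
   decision tree: [Query i j A B] compares x_i and x_j and continues with A if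
   the comparator answers "x_i >= x_j", with B if it answers "x_j >= x_i";
   [Leaf o] outputs element o. *)
Inductive alg (n : nat) : Type :=
| Leaf of 'I_n
| Query of 'I_n & 'I_n & alg n & alg n.

(* [run x A m o]: on input values x, some consistent (possibly adversarial,
   adaptive) comparator behaviour makes A perform exactly m comparisons and
   output o. *)
Inductive run (n : nat) (x : 'I_n -> R) : alg n -> nat -> 'I_n -> Prop :=
| run_leaf (o : 'I_n) : run x (Leaf o) 0 o
| run_ge (i j : 'I_n) (A B : alg n) (m : nat) (o : 'I_n) :
    (Rabs (x i - x j) <= 1 \/ x j <= x i)%R ->
    run x A m o -> run x (Query i j A B) m.+1 o
| run_le (i j : 'I_n) (A B : alg n) (m : nat) (o : 'I_n) :
    (Rabs (x i - x j) <= 1 \/ x i <= x j)%R ->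
    run x B m o -> run x (Query i j A B) m.+1 o.

Definition has_error (n : nat) (A : alg n) (k : R) : Prop :=
  forall (x : 'I_n -> R) (m : nat) (o : 'I_n), run x A m o ->
    forall i : 'I_n, (x i - k <= x o)%R.

From mathcomp Require Import all_boot zify.
From Stdlib Require Import Reals Lra.
Set Implicit Arguments.
Unset Strict Implicit.

(* The adversary answers every comparison in favour of the element that has won
   fewer comparisons so far, and fixes the values only at the end: x_v is the
   distance from the output o to v in the graph of recorded answers (capped at
   k + 1), which makes every answer consistent.  Error k forces every element
   within distance k of o.  The adversary's balance invariant (an element has
   beaten at most min(t, its wins) elements with fewer than t wins) bounds the
   growth of balls around o by |S_(r+1)|^2 <= 36 q |S_r| after q comparisons,
   so n^(2^k) <= (36 q)^(2^k - 1), i.e. q >= n^(1 + 1/(2^k - 1)) / 36. *)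

Lemma sqr_le_of_threshold_bounds (q s s' : nat) :
  (0 < q)%N -> (0 < s <= q.+1)%N ->
  (forall t, 0 < t -> exists2 b, t * b <= q & s' <= s + s * t + b)%N ->
  (s' * s' <= 36 * q * s)%N.
Proof.
move=> q_gt0 /andP[s_gt0 s_le] bounds.
have [|t /andP[t_gt0 q_le] t_min] := ex_minnP (_ : exists t, (0 < t) && (q <= s * t * t))%N.
  by exists q; apply/andP; split => //; nia.
have [b tb_le s'_le] := bounds t t_gt0.
have [t1 | t_ne1] := eqVneq t 1%N.
  move: q_le s'_le; rewrite t1; nia.
have q_gt : (s * t.-1 * t.-1 < q)%N.
  rewrite ltnNge; apply/negP => q_le'.
  have := t_min t.-1; rewrite q_le' andbT; lia.
have b_le : (b <= s * t)%N by rewrite -(leq_pmul2l t_gt0); nia.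
have s'_le6 : (s' <= 6 * (s * t.-1))%N by nia.
apply: leq_trans (leq_mul s'_le6 s'_le6) _.
have : (s * (s * t.-1 * t.-1) <= s * q)%N by rewrite leq_mul2l ltnW ?orbT.
nia.
Qed.

Lemma pow_pow2_le_of_sqr_le (D : R) (s : nat -> R) :
  (0 <= D)%R -> s 0%N = 1%R -> (forall r, 0 <= s r)%R ->
  (forall r, s r.+1 ^ 2 <= D * s r)%R ->
  forall r, (s r ^ (2 ^ r) <= D ^ (2 ^ r - 1))%R.
Proof.
move=> D_ge0 s0 s_ge0 s_step; elim=> [|r IH]; first by rewrite s0 /=; lra.
have P_gt0 : (0 < 2 ^ r)%N by have := @Nat.pow_nonzero 2 r; lia.
rewrite Nat.pow_succ_r'.
have -> : (2 * 2 ^ r - 1 = 2 ^ r + (2 ^ r - 1))%N by lia.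
rewrite pow_mult pow_add.
apply: Rle_trans (_ : (D * s r) ^ (2 ^ r) <= _)%R.
  by apply: pow_incr; split; [apply: pow_le | apply: s_step].
by rewrite Rpow_mult_distr; apply: Rmult_le_compat_l; [apply: pow_le | apply: IH].
Qed.

Lemma Rpower_le_of_pow_le (x D : R) (P : nat) :
  (0 < x)%R -> (0 < D)%R -> (1 < P)%N -> (x ^ P <= D ^ (P - 1))%R ->
  (Rpower x (1 + 1 / (INR P - 1)) <= D)%R.
Proof.
move=> x_gt0 D_gt0 P_gt1 pow_le.
have P_ge2 : (2 <= INR P)%R by apply: (le_INR 2); apply/leP.
have P1E : INR (P - 1) = (INR P - 1)%R by rewrite (minus_INR _ 1) //; apply/leP; lia.
set e := (1 / (INR P - 1))%R.
have e_ge0 : (0 <= e)%R by rewrite /e; apply: Rlt_le; apply: Rdiv_lt_0_compat; lra.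
have -> : (1 + e = INR P * e)%R by rewrite /e; field; lra.
rewrite -Rpower_mult Rpower_pow //.
apply: Rle_trans (_ : Rpower (D ^ (P - 1)) e <= _)%R.
  by apply: Rle_Rpower_l => //; split => //; apply: pow_lt.
have e_inv : ((INR P - 1) * e = 1)%R by rewrite /e; field; lra.
by rewrite -Rpower_pow // Rpower_mult P1E e_inv Rpower_1 //; apply: Rle_refl.
Qed.

Lemma card_bigcup_le (T I : finType) (A : {pred I}) (B : I -> {set T}) :
  (#|\bigcup_(v in A) B v| <= \sum_(v in A) #|B v|)%N.
Proof.
elim/big_rec2: _ => [|i X y _ IH]; first by rewrite cards0.
by apply: leq_trans (leq_card_setU _ _).1 _; rewrite leq_add2l.
Qed.

Section WinCounts.
Variable n : nat.
Implicit Types (L : seq ('I_n * 'I_n)) (u v : 'I_n).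

(* [L] logs the answered comparisons as pairs (winner, loser). *)
Definition wins L v : nat := count (fun e => e.1 == v) L.

Definition beaten L v t : {set 'I_n} :=
  [set u | ((v, u) \in L) && (wins L u < t)].

Definition balanced L : Prop := forall v t, (#|beaten L v t| <= minn t (wins L v))%N.

Lemma wins_rcons L i j v : wins (rcons L (i, j)) v = (wins L v + (i == v))%N.
Proof. by rewrite /wins -cats1 count_cat /= addn0. Qed.

Lemma balanced_nil : balanced [::].
Proof.
by move=> v t; rewrite (_ : beaten _ _ _ = set0) ?cards0 //; apply/setP => u; rewrite !inE.
Qed.

Lemma beaten_rcons L i j v t :
  beaten (rcons L (i, j)) v t \subset
  (if (v == i) && (wins (rcons L (i, j)) j < t) then j |: beaten L v t else beaten L v t).
Proof.
apply/subsetP => u; rewrite !inE mem_rcons in_cons wins_rcons.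
case/andP => /orP[/eqP[-> ->] | vu_in] wins_lt.
  by rewrite eqxx wins_rcons wins_lt !inE eqxx.
have old : ((v, u) \in L) && (wins L u < t) by rewrite vu_in; lia.
by case: ifP; rewrite ?inE old ?orbT.
Qed.

Lemma balanced_rcons L i j :
  balanced L -> (wins L i <= wins L j)%N -> balanced (rcons L (i, j)).
Proof.
move=> bal wins_le v t; apply: leq_trans (subset_leq_card (beaten_rcons L i j v t)) _.
rewrite !wins_rcons; case: (eqVneq v i) (bal v t) => [-> | _] card_le /=; last by rewrite addn0.
case: ifP => [j_lt | _]; last by apply: leq_trans card_le _; lia.
rewrite cardsU1; apply: leq_trans (leq_add (leq_b1 _) card_le) _.
move: j_lt; case: (i == j) => /=; lia.
Qed.

Lemma sum_wins L : (\sum_v wins L v)%N = size L.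
Proof.
elim: L => [|e L IH]; first by rewrite big1.
rewrite /wins /=; under eq_bigr => u _ do rewrite -/(wins L u).
rewrite big_split /= IH (bigD1 e.1) //= eqxx big1 ?addn0 // => u u_ne.
by rewrite eq_sym (negbTE u_ne).
Qed.

Lemma mul_card_wins_ge L t : (t * #|[set u | t <= wins L u]| <= size L)%N.
Proof.
rewrite -sum_wins mulnC -sum_nat_const.
apply: leq_trans (_ : \sum_(u in [set u | t <= wins L u]) wins L u <= _)%N.
  by apply: leq_sum => u; rewrite inE.
by rewrite [X in (_ <= X)%N](bigID [in [set u | t <= wins L u]]) leq_addr.
Qed.

End WinCounts.

Section Reach.
Variable n : nat.
Variables (L : seq ('I_n * 'I_n)) (o : 'I_n).

Fixpoint reach (r : nat) : {set 'I_n} :=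
  if r is r'.+1 then reach r' :|: [set u | [exists v, (v \in reach r') && ((v, u) \in L)]]
  else [set o].

Lemma reach_mono r r' : (r <= r')%N -> reach r \subset reach r'.
Proof.
elim: r' => [|r' IH]; first by rewrite leqn0 => /eqP ->.
rewrite leq_eqVlt => /orP[/eqP -> // | r_lt].
exact: subset_trans (IH r_lt) (subsetUl _ _).
Qed.

Lemma root_in_reach r : o \in reach r.
Proof. by apply: (subsetP (reach_mono (leq0n r))); rewrite inE. Qed.

Lemma card_reach_le r : (#|reach r| <= (size L).+1)%N.
Proof.
have sub : reach r \subset o |: [set u | u \in map snd L].
  elim: r => [|r IH]; first by rewrite sub1set !inE eqxx.
  rewrite /= subUset IH; apply/subsetP => u; rewrite !inE.
  by case/existsP => v /andP[_ vu_in]; apply/orP; right; apply/mapP; exists (v, u).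
apply: leq_trans (subset_leq_card sub) _.
rewrite cardsU1 -add1n leq_add ?leq_b1 // cardsE -(size_map snd); exact: card_size.
Qed.

Lemma card_reach_gt0 r : (0 < #|reach r|)%N.
Proof. by rewrite card_gt0; apply/set0Pn; exists o; apply: root_in_reach. Qed.

Hypothesis L_bal : balanced L.

Lemma card_reach_succ_le r t : (0 < t)%N ->
  (#|reach r.+1| <= #|reach r| + #|reach r| * t + #|[set u | t <= wins L u]|)%N.
Proof.
move=> t_gt0.
have sub : reach r.+1 \subset
    (reach r :|: \bigcup_(v in reach r) beaten L v t) :|: [set u | t <= wins L u].
  rewrite /= subUset subsetU ?subsetUl //; apply/subsetP => u; rewrite !inE.
  case/existsP => v /andP[v_in vu_in].
  case: (ltnP (wins L u) t) => [wins_lt | _]; last by rewrite orbT.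
  by apply/orP; left; apply/orP; right; apply/bigcupP; exists v; rewrite // inE vu_in.
apply: leq_trans (subset_leq_card sub) _.
apply: leq_trans (leq_card_setU _ _).1 _; rewrite leq_add2r.
apply: leq_trans (leq_card_setU _ _).1 _; rewrite leq_add2l.
apply: leq_trans (card_bigcup_le _ _) _.
rewrite -sum_nat_const; apply: leq_sum => v _.
exact: leq_trans (L_bal v t) (geq_minl _ _).
Qed.

Lemma card_reach_succ_sqr r : (0 < size L)%N ->
  (#|reach r.+1| * #|reach r.+1| <= 36 * size L * #|reach r|)%N.
Proof.
move=> L_gt0; apply: sqr_le_of_threshold_bounds => //.
  by rewrite card_reach_gt0 card_reach_le.
move=> t t_gt0; exists #|[set u | t <= wins L u]|; first exact: mul_card_wins_ge.
exact: card_reach_succ_le.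
Qed.

Lemma pow_card_reach_le r : (0 < size L)%N ->
  (INR #|reach r| ^ (2 ^ r) <= (36 * INR (size L)) ^ (2 ^ r - 1))%R.
Proof.
move=> L_gt0.
apply: (@pow_pow2_le_of_sqr_le _ (fun r => INR #|reach r|)).
- by have := pos_INR (size L); lra.
- by rewrite /= cards1; reflexivity.
- by move=> r'; apply: pos_INR.
move=> r'; have := le_INR _ _ (elimT leP (card_reach_succ_sqr r' L_gt0)).
have INR36 : INR 36 = 36%R by rewrite /=; lra.
by rewrite -!multE !mult_INR INR36 /pow Rmult_1_r.
Qed.

Lemma Rpower_card_reach_le k : (0 < k)%N -> (0 < size L)%N ->
  (Rpower (INR #|reach k|) (1 + 1 / (2 ^ k - 1)) <= 36 * INR (size L))%R.
Proof.
move=> k_gt0 L_gt0.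
have two_pow : (2 ^ k = INR (2 ^ k))%R by rewrite pow_INR.
rewrite two_pow; apply: Rpower_le_of_pow_le.
- by apply: (lt_INR 0); apply/ltP; apply: card_reach_gt0.
- by apply: Rmult_lt_0_compat; [lra | apply: (lt_INR 0); apply/ltP].
- have : (2 ^ 1 <= 2 ^ k)%coq_nat by apply: Nat.pow_le_mono_r; lia.
  by rewrite /=; lia.
exact: pow_card_reach_le.
Qed.

(* The distance from [o] to [v], capped at [k + 1]. *)
Definition depth k v : nat := (\sum_(r < k.+1) (v \notin reach r))%N.

Lemma depth_root k : depth k o = 0%N.
Proof. by rewrite /depth big1 // => r _; rewrite root_in_reach. Qed.

Lemma depth_edge k a b : (b, a) \in L -> (depth k a <= (depth k b).+1)%N.
Proof.
move=> ba_in; rewrite /depth big_ord_recl big_ord_recr /=.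
have shift : (\sum_(r < k) (a \notin reach (bump 0 r)) <= \sum_(r < k) (b \notin reach r))%N.
  apply: leq_sum => r _; case b_in: (b \in reach r); last exact: leq_b1.
  suff : a \in reach r.+1 by rewrite /bump /= => ->.
  by rewrite /= !inE; apply/orP; right; apply/existsP; exists b; rewrite b_in ba_in.
by apply: leq_trans (leq_add (leq_b1 _) shift) _; rewrite add1n ltnS leq_addr.
Qed.

Lemma mem_reach_of_depth_le k v : (depth k v <= k)%N -> v \in reach k.
Proof.
apply: contraTT => v_notin; rewrite -ltnNge /depth (eq_bigr (fun _ => 1%N)).
  by rewrite sum1_card card_ord.
move=> r _; suff -> : v \notin reach r by [].
by apply: contra v_notin; apply: (subsetP (reach_mono _)); rewrite -ltnS ltn_ord.
Qed.

End Reach.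

Section Adversary.
Variable n : nat.
Implicit Types (L : seq ('I_n * 'I_n)) (A : alg n).

Fixpoint play A L : seq ('I_n * 'I_n) * 'I_n :=
  match A with
  | Leaf o => (L, o)
  | Query i j A1 A2 =>
      if (wins L i <= wins L j)%N then play A1 (rcons L (i, j))
      else play A2 (rcons L (j, i))
  end.

Lemma play_cat A L : exists s, (play A L).1 = L ++ s.
Proof.
elim: A L => [o | i j A1 IH1 A2 IH2] L /=; first by exists [::]; rewrite cats0.
case: ifP => _; [have [s ->] := IH1 (rcons L (i, j)) | have [s ->] := IH2 (rcons L (j, i))].
  by exists ((i, j) :: s); rewrite -cats1 -catA.
by exists ((j, i) :: s); rewrite -cats1 -catA.
Qed.

Lemma balanced_play A L : balanced L -> balanced (play A L).1.
Proof.
elim: A L => [o | i j A1 IH1 A2 IH2] L L_bal //=.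
case: ifP => [le_ij | /negbT]; first by apply/IH1/balanced_rcons.
by rewrite -ltnNge => /ltnW lt_ji; apply/IH2/balanced_rcons.
Qed.

Lemma consistent_ge (x : 'I_n -> R) i j :
  (x j <= x i + 1)%R -> (Rabs (x i - x j) <= 1 \/ x j <= x i)%R.
Proof.
move=> le_ji; case: (Rle_dec (x j) (x i)) => [| lt_ij]; first by right.
by left; rewrite Rabs_left1; lra.
Qed.

Lemma run_play (x : 'I_n -> R) A L :
  (forall e, e \in (play A L).1 -> x e.2 <= x e.1 + 1)%R ->
  run x A (size (play A L).1 - size L) (play A L).2.
Proof.
elim: A L => [o | i j A1 IH1 A2 IH2] L /=; first by rewrite subnn; constructor.
have size_play A' e : (size (play A' (rcons L e)).1 - size L =
                      (size (play A' (rcons L e)).1 - size (rcons L e)).+1)%N.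
  by have [s ->] := play_cat A' (rcons L e); rewrite size_cat size_rcons; lia.
have last_in A' e : e \in (play A' (rcons L e)).1.
  by have [s ->] := play_cat A' (rcons L e); rewrite mem_cat mem_rcons mem_head.
case: ifP => _ edges_le; rewrite size_play.
  by apply: run_ge; [apply: consistent_ge; apply: (edges_le (i, j)) | apply: IH1].
apply: run_le; last exact: IH2.
have [close | le_ij] := consistent_ge (edges_le (j, i) (last_in _ _)); last by right.
by rewrite Rabs_minus_sym; left.
Qed.

End Adversary.

Theorem mainTheorem16 :
  forall k : nat, (0 < k)%N ->
  exists c : R, (0 < c)%R /\
  exists N : nat, forall n : nat, (N <= n)%N ->
  forall A : alg n, has_error A (INR k) ->
  exists (x : 'I_n -> R) (m : nat) (o : 'I_n),
    run x A m o /\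
    (c * Rpower (INR n) (1 + 1 / (2 ^ k - 1)) <= INR m)%R.
Proof.
move=> k k_gt0; exists (1 / 36)%R; split; first lra.
exists 2%N => n n_ge2 A errA.
case play_A: (play A [::]) => [L o].
have L_bal : balanced L by have := balanced_play A (@balanced_nil n); rewrite play_A.
pose x v := INR (depth L o k v).
have run_L : run x A (size L) o.
  have := @run_play n x A [::]; rewrite play_A subn0; apply=> -[b a] /depth_edge depth_le /=.
  by rewrite /x -S_INR; apply/le_INR/leP.
exists x, (size L), o; split => //.
have reach_full : #|reach L o k| = n.
  suff -> : reach L o k = setT by rewrite cardsT card_ord.
  apply/setP => i; rewrite inE; apply: mem_reach_of_depth_le; apply/leP/INR_le.
  by have := errA _ _ _ run_L i; rewrite /x depth_root /=; lra.
have L_gt0 : (0 < size L)%N by have := card_reach_le L o k; rewrite reach_full; lia.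
have := Rpower_card_reach_le o L_bal k_gt0 L_gt0; rewrite reach_full; lra.
Qed.
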